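(* The Petersen graph $P$ satisfies $\mathcal{C}_f(P)=4$.
   Context: All graphs are finite and simple; $G=(V,E)$, $N(v)$ is the open neighborhood of $v$. The Petersen graph is the cubic graph on 10 vertices whose vertices are the 2-element subsets of $\{1,\dots,5\}$, two being adjacent iff they are disjoint. A dominating set is $D\subseteq V$ such that every vertex of $V\setminus D$ has a neighbor in $D$. For an integer $k\geq 1$, a $k$-fair dominating set is a dominating set $D$ such that $|N(v)\cap D|=k$ for every $v\in V\setminus D$. A fair dominating set is a $k$-fair dominating set for some integer $k\geq 1$. A fair coalition consists of two disjoint sets $A_1,A_2\subseteq V$, neither of which is a fair dominating set, such that $A_1\cup A_2$ is a fair dominating set. A fair coalition partition ($fc$-partition) of $G$ is a partition $\Upsilon=\{A_1,\dots,A_k\}$ of $V$ such that every $A_i$ is either a singleton fair dominating set of $G$, or is not a fair dominating set and forms a fair coalition with some other non-fair-dominating set $A_j\in\Upsilon$. The fair coalition number $\mathcal{C}_f(G)$ is the maximum number of parts of an $fc$-partition of $G$. *)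

From mathcomp Require Import all_boot.
Set Implicit Arguments. Unset Strict Implicit. Unset Printing Implicit Defensive.

Section FairCoalitions.
Variables (T : finType) (e : rel T).

Definition nbhd (v : T) : {set T} := [set u | e v u].

Definition dominating (D : {set T}) : Prop :=
  forall v, v \notin D -> exists2 u, u \in D & e v u.

Definition k_fair_dominating (k : nat) (D : {set T}) : Prop :=
  dominating D /\ forall v, v \notin D -> #|nbhd v :&: D| = k.

Definition fair_dominating (D : {set T}) : Prop :=
  exists k, 1 <= k /\ k_fair_dominating k D.

Definition fair_coalition (A1 A2 : {set T}) : Prop :=
  [disjoint A1 & A2] /\ ~ fair_dominating A1 /\ ~ fair_dominating A2 /\
  fair_dominating (A1 :|: A2).

Definition fc_partition (P : {set {set T}}) : Prop :=
  partition P [set: T] /\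
  forall A, A \in P ->
    (#|A| = 1 /\ fair_dominating A) \/
    (~ fair_dominating A /\ exists2 B, B \in P & B != A /\ fair_coalition A B).

Definition is_fair_coalition_number (n : nat) : Prop :=
  (exists P, fc_partition P /\ #|P| = n) /\
  (forall P, fc_partition P -> #|P| <= n).
End FairCoalitions.

Definition petersen_vertex := {A : {set 'I_5} | #|A| == 2}.
Definition petersen_adj : rel petersen_vertex :=
  fun x y => [disjoint val x & val y].

From mathcomp Require Import all_boot.
Set Implicit Arguments. Unset Strict Implicit. Unset Printing Implicit Defensive.

(* Sets of vertices are encoded as bit masks along an explicit listing of the
   vertices; under this encoding fair domination, partitions and fc-partitions
   become boolean properties of masks.  Four parts are attained by the
   partition into {0,1}, {0,3}, {1,2} and the seven remaining vertices: adding
   one of the singletons to the large part leaves two vertices outside, and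
   both have the same number of neighbours inside.  That no fc-partition has
   five or more parts is checked by enumerating all set partitions of the ten
   vertices, with fair domination of all 2^10 masks computed once. *)

Definition mask_or (M N : seq bool) : seq bool := [seq x.1 || x.2 | x <- zip M N].
Definition mask_and (M N : seq bool) : seq bool := [seq x.1 && x.2 | x <- zip M N].

Lemma size_mask_or M N : size M = size N -> size (mask_or M N) = size M.
Proof. by move=> eqMN; rewrite size_map size_zip eqMN minnn. Qed.

Lemma nth_mask_or M N k : size M = size N ->
  nth false (mask_or M N) k = nth false M k || nth false N k.
Proof.
move=> eqMN; have [ltkM | leMk] := ltnP k (size M).
  by rewrite (nth_map (false, false)) ?nth_zip // size_zip -eqMN minnn.
by rewrite !nth_default -?eqMN ?size_mask_or.
Qed.

Lemma nth_true_size M k : nth false M k -> k < size M.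
Proof. by apply: contraLR; rewrite -leqNgt => /(nth_default false) ->. Qed.

Fixpoint submasks (M : seq bool) : seq (seq bool) :=
  if M is b :: M' then
    let S := submasks M' in map (cons false) S ++ (if b then map (cons true) S else [::])
  else [:: [::]].

Lemma mem_submasks M S : size S = size M ->
  (forall k, nth false S k -> nth false M k) -> S \in submasks M.
Proof.
elim: M S => [|b M IH] [|a S] //= [eqSM] subSM.
have SM : S \in submasks M by apply: IH => // k; apply: (subSM k.+1).
rewrite mem_cat; case: a subSM => [/(_ 0 isT) /= -> | _]; apply/orP.
  by right; exact: map_f.
by left; exact: map_f.
Qed.

Lemma count_eq1_inj (X : eqType) (p : pred X) s :
  count p s = 1 -> {in s &, forall x y, p x -> p y -> x = y}.
Proof.
rewrite -size_filter => filter1 x y xs ys px py.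
have: x \in filter p s by rewrite mem_filter px.
have: y \in filter p s by rewrite mem_filter py.
by case: (filter p s) filter1 => [|z []] //= _; rewrite !inE => /eqP -> /eqP ->.
Qed.

Definition mask_partition (n : nat) (L : seq (seq bool)) : bool :=
  [&& uniq L, all (fun M => (size M == n) && has id M) L &
      all (fun k => count (fun M => nth false M k) L == 1) (iota 0 n)].

Section MaskPartition.
Variables (n : nat) (L : seq (seq bool)).
Hypothesis L_partition : mask_partition n L.

Lemma mask_partition_uniq : uniq L.
Proof. by case/and3P: L_partition. Qed.

Lemma mask_partition_size M : M \in L -> size M = n.
Proof. by case/and3P: L_partition => _ /allP blocks _ /blocks /andP [/eqP]. Qed.

Lemma mask_partition_has M : M \in L -> has id M.
Proof. by case/and3P: L_partition => _ /allP blocks _ /blocks /andP []. Qed.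

Lemma mask_partition_count k : k < n -> count (fun M => nth false M k) L = 1.
Proof.
by case/and3P: L_partition => _ _ /allP cover ltkn; apply/eqP/cover; rewrite mem_iota.
Qed.

Lemma mask_partition_cover k : k < n -> exists2 M, M \in L & nth false M k.
Proof. by move/mask_partition_count=> cnt; apply/hasP; rewrite has_count cnt. Qed.

Lemma mask_partition_disjoint M N k : M \in L -> N \in L ->
  nth false M k -> nth false N k -> M = N.
Proof.
move=> ML NL Mk; have ltkn : k < n.
  by rewrite -(mask_partition_size ML); exact: nth_true_size.
exact: count_eq1_inj (mask_partition_count ltkn) _ _ ML NL Mk.
Qed.

Lemma covering_blocks_perm blocks :
  {subset blocks <= L} -> (forall k, k < n -> has (fun M => nth false M k) blocks) ->
  uniq blocks -> perm_eq blocks L.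
Proof.
move=> sub_blocks cover_blocks uniq_blocks.
apply: uniq_perm => //; first exact: mask_partition_uniq.
move=> M; apply/idP/idP => [/sub_blocks //| ML].
have /(has_nthP false) [k _ Mk] := mask_partition_has ML.
have /hasP [N Nb Nk] : has (fun M => nth false M k) blocks.
  by apply: cover_blocks; rewrite -(mask_partition_size ML); exact: nth_true_size.
by rewrite (mask_partition_disjoint ML (sub_blocks _ Nb) Mk Nk).
Qed.

End MaskPartition.

(* Each partition extending [blocks] is reached by choosing, among the submasks
   of the uncovered indices, the block of the first uncovered index. *)
Fixpoint check_partitions (chk : seq (seq bool) -> bool) (fuel : nat)
    (used : seq bool) (blocks : seq (seq bool)) : bool :=
  if fuel is fuel'.+1 then
    if all id used then chk blocks else
    let i := find negb used in
    all (fun S => check_partitions chk fuel' (mask_or used S) (S :: blocks))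
        [seq S <- submasks (map negb used) | nth false S i]
  else false.

Section CheckPartitions.
Variables (chk : seq (seq bool) -> bool) (n : nat) (L : seq (seq bool)).
Hypothesis chk_perm : forall L1 L2, perm_eq L1 L2 -> chk L1 -> chk L2.
Hypothesis L_partition : mask_partition n L.

Lemma check_partitions_sound fuel used blocks :
  check_partitions chk fuel used blocks -> size used = n -> {subset blocks <= L} ->
  uniq blocks -> (forall k, nth false used k = has (fun M => nth false M k) blocks) ->
  chk L.
Proof.
elim: fuel used blocks => // fuel IH used blocks /=.
move=> check_used size_used sub_blocks uniq_blocks usedE.
have L_size := mask_partition_size L_partition.
case: ifP check_used => [all_used | /negbT not_all_used] check_used.
  apply: chk_perm check_used; apply: (covering_blocks_perm L_partition) => // k ltkn.
  by rewrite -usedE; apply/(all_nthP false all_used); rewrite size_used.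
set i := find negb used.
have has_free : has negb used by rewrite has_predC.
have lt_in : i < n by rewrite -size_used -has_find.
have used_i : nth false used i = false by apply/negbTE/(nth_find false has_free).
have [S SL Si] := mask_partition_cover L_partition lt_in.
have S_fresh : S \notin blocks.
  by apply: contraFN used_i => Sb; rewrite usedE; apply/hasP; exists S.
have S_unused k : nth false S k -> nth false used k = false.
  move=> Sk; apply/negbTE; rewrite usedE; apply/hasP => -[M Mb Mk].
  have MS := mask_partition_disjoint L_partition (sub_blocks _ Mb) SL Mk Sk.
  by rewrite -MS Mb in S_fresh.
have S_candidate : S \in [seq S <- submasks (map negb used) | nth false S i].
  rewrite mem_filter Si; apply: mem_submasks => [|k Sk].
    by rewrite size_map size_used L_size.
  by rewrite (nth_map false) ?S_unused // size_used -(L_size _ SL) nth_true_size.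
apply: (IH _ _ (allP check_used _ S_candidate)).
- by rewrite size_mask_or size_used ?L_size.
- by move=> M; rewrite inE => /predU1P [-> //|]; exact: sub_blocks.
- by rewrite /= S_fresh.
- by move=> k; rewrite nth_mask_or ?size_used ?L_size // usedE /= orbC.
Qed.

Lemma check_partitions_all fuel : check_partitions chk fuel (nseq n false) [::] -> chk L.
Proof.
move/check_partitions_sound; apply=> //; first by rewrite size_nseq.
by move=> k; rewrite nth_nseq if_same.
Qed.

End CheckPartitions.

(* [c] lists the numbers of [M]-neighbours of the vertices outside [M]; the
   default [1] covers the mask of all vertices. *)
Definition fair_dominating_mask (g : seq (seq bool)) (M : seq bool) : bool :=
  let c := [seq count id (mask_and p.2 M) | p <- zip M g & ~~ p.1] in
  (0 < head 1 c) && all (pred1 (head 1 c)) c.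

Definition coalition_ok (f : pred (seq bool)) (L : seq (seq bool)) (M : seq bool) : bool :=
  (count id M == 1) && f M || ~~ f M && has (fun N => [&& N != M, ~~ f N & f (mask_or M N)]) L.

Definition fc_masks (f : pred (seq bool)) (L : seq (seq bool)) : bool :=
  all (coalition_ok f L) L.

Lemma fc_masks_eq_mem f L1 L2 : L1 =i L2 -> fc_masks f L1 = fc_masks f L2.
Proof.
move=> eqL; rewrite /fc_masks (eq_all_r eqL); apply: eq_all => M.
by rewrite /coalition_ok (eq_has_r eqL).
Qed.

Definition fc_bounded (f : pred (seq bool)) (m : nat) (L : seq (seq bool)) : bool :=
  fc_masks f L ==> (size L <= m).

Lemma fc_bounded_perm f m L1 L2 : perm_eq L1 L2 -> fc_bounded f m L1 -> fc_bounded f m L2.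
Proof. by move=> eqL; rewrite /fc_bounded (perm_size eqL) (fc_masks_eq_mem _ (perm_mem eqL)). Qed.

Lemma fc_masks_eq_in n f1 f2 L : (forall M, size M = n -> f1 M = f2 M) ->
  (forall M, M \in L -> size M = n) -> fc_masks f1 L = fc_masks f2 L.
Proof.
move=> eqf sizeL; apply: eq_in_all => M ML; rewrite /coalition_ok eqf ?sizeL //.
congr (_ || (_ && _)); apply: eq_in_has => N NL.
by rewrite !eqf ?size_mask_or ?(sizeL M) ?(sizeL N).
Qed.

Inductive bool_trie := Leaf of bool | Node of bool_trie & bool_trie.

(* Under [vm_compute] the trie [tabulate f n] is evaluated once, so a search
   looking [f] up in it evaluates [f] at most once per mask. *)
Fixpoint tabulate (f : seq bool -> bool) (n : nat) : bool_trie :=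
  if n is n'.+1 then Node (tabulate (f \o cons false) n') (tabulate (f \o cons true) n')
  else Leaf (f [::]).

Fixpoint lookup (t : bool_trie) (M : seq bool) : bool :=
  match t, M with
  | Node t0 t1, b :: M' => lookup (if b then t1 else t0) M'
  | Leaf b, _ => b
  | _, _ => false
  end.

Lemma lookup_tabulate f n M : size M = n -> lookup (tabulate f n) M = f M.
Proof. by elim: n f M => [|n IH] f [|[] M] //= [/IH ->]. Qed.

Section MaskEncoding.
Variables (T : finType) (e : rel T) (s : seq T).
Hypotheses (s_uniq : uniq s) (s_full : forall v, v \in s).
Local Notation n := (size s).

Definition bits (A : {set T}) : seq bool := [seq v \in A | v <- s].
Definition unbits (M : seq bool) : {set T} := [set v | nth false M (index v s)].
Definition adjacency : seq (seq bool) := [seq bits (nbhd e v) | v <- s].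
Local Notation fdm := (fair_dominating_mask adjacency).

Lemma size_bits A : size (bits A) = n.
Proof. exact: size_map. Qed.

Lemma index_lt v : index v s < n.
Proof. by rewrite index_mem. Qed.

Lemma index_onto k : k < n -> exists v, index v s = k.
Proof.
case: s s_uniq => // v0 s' s_uniq' ltk.
by exists (nth v0 (v0 :: s') k); rewrite index_uniq.
Qed.

Lemma nth_bits A v : nth false (bits A) (index v s) = (v \in A).
Proof. by rewrite (nth_map v) ?index_lt // nth_index. Qed.

Lemma in_unbits M v : (v \in unbits M) = nth false M (index v s).
Proof. by rewrite inE. Qed.

Lemma bits_unbits M : size M = n -> bits (unbits M) = M.
Proof.
move=> sizeM; apply: (@eq_from_nth _ false); rewrite size_bits // => k /index_onto [v <-].
by rewrite nth_bits in_unbits.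
Qed.

Lemma bits_inj : injective bits.
Proof. by move=> A B eqAB; apply/setP => v; rewrite -!nth_bits eqAB. Qed.

Lemma count_bits A : count id (bits A) = #|A|.
Proof.
rewrite count_map -size_filter -(card_uniqP (filter_uniq _ s_uniq)).
by apply: eq_card => v; rewrite mem_filter s_full andbT.
Qed.

Lemma bits_setU A B : mask_or (bits A) (bits B) = bits (A :|: B).
Proof. by rewrite /mask_or zip_map -map_comp; apply: eq_map => v; rewrite inE. Qed.

Lemma bits_setI A B : mask_and (bits A) (bits B) = bits (A :&: B).
Proof. by rewrite /mask_and zip_map -map_comp; apply: eq_map => v; rewrite inE. Qed.

Lemma fair_dominatingP A : reflect (fair_dominating e A) (fdm (bits A)).
Proof.
have zipE : zip (bits A) adjacency = [seq (v \in A, bits (nbhd e v)) | v <- s].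
  exact: zip_map.
rewrite /fair_dominating_mask zipE filter_map -map_comp; set c := map _ _.
have cE x : x \in c = [exists v in ~: A, #|nbhd e v :&: A| == x].
  apply/mapP/exists_inP => [[v] | [v vA /eqP <-]].
    rewrite mem_filter => /andP [vA _] ->.
    by exists v; rewrite ?inE //= bits_setI count_bits.
  by exists v; rewrite ?mem_filter /= -?in_setC ?vA ?s_full //= bits_setI count_bits.
apply: (iffP andP) => [[k_gt0 /allP all_k] | [k [k_gt0 [_ fair_k]]]].
  have card_k v : v \notin A -> #|nbhd e v :&: A| = head 1 c.
    by move=> vA; apply/eqP/all_k; rewrite cE; apply/exists_inP; exists v; rewrite ?inE.
  exists (head 1 c); do 2!split=> //; move=> v /card_k cardv.
  have /card_gt0P [u] : 0 < #|nbhd e v :&: A| by rewrite cardv.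
  by rewrite !inE => /andP [vu uA]; exists u.
have c_k x : x \in c -> x = k by rewrite cE => /exists_inP [v]; rewrite inE => /fair_k -> /eqP.
clear cE; split.
  by case: c c_k => [|x c'] //= c_k; rewrite (c_k x) ?mem_head.
apply/allP => y yc; rewrite /= (c_k y yc); case: c c_k yc => [|x c'] //= c_k _.
by rewrite (c_k x) ?mem_head.
Qed.

Lemma mask_partition_bits P : partition P [set: T] -> mask_partition n (map bits (enum P)).
Proof.
case/and3P => /eqP coverP trivP set0P; apply/and3P; split.
- by rewrite map_inj_uniq ?enum_uniq //; exact: bits_inj.
- apply/allP => _ /mapP [A AP ->]; rewrite size_bits eqxx /=.
  have /set0Pn [v vA] : A != set0 by apply: contraNneq set0P => <-; rewrite -mem_enum.
  by apply/(has_nthP false); exists (index v s); rewrite ?size_bits ?index_lt ?nth_bits.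
- apply/allP => k; rewrite mem_iota => /andP [_ /index_onto [v <-]].
  have vP : v \in cover P by rewrite coverP inE.
  have blockE : {in enum P, forall A, nth false (bits A) (index v s) = (A == pblock P v)}.
    move=> A; rewrite mem_enum nth_bits => AP.
    apply/idP/eqP => [vA | ->]; first by rewrite (def_pblock trivP AP vA).
    by rewrite mem_pblock.
  by rewrite count_map (eq_in_count blockE) count_uniq_mem ?enum_uniq // mem_enum pblock_mem.
Qed.

Section FromMasks.
Variable L : seq (seq bool).
Hypothesis L_partition : mask_partition n L.

Lemma partition_unbits : partition [set:: map unbits L] [set: T].
Proof.
apply/and3P; split.
- apply/eqP/setP => v; rewrite inE; apply/bigcupP.
  have [M ML Mv] := mask_partition_cover L_partition (index_lt v).
  by exists (unbits M); rewrite ?inE ?map_f ?in_unbits.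
- apply/trivIsetP => A B; rewrite !inE => /mapP [M ML ->] /mapP [N NL ->] neqMN.
  rewrite -setI_eq0; apply/eqP/setP => v; rewrite !inE.
  apply/negbTE/andP => -[Mv Nv].
  by rewrite (mask_partition_disjoint L_partition ML NL Mv Nv) eqxx in neqMN.
- rewrite inE; apply/mapP => -[M ML M0].
  have /(has_nthP false) [k ltk Mk] := mask_partition_has L_partition ML.
  rewrite (mask_partition_size L_partition ML) in ltk; have [v vk] := index_onto ltk.
  by have := in_unbits M v; rewrite -M0 inE vk Mk.
Qed.

Lemma card_unbits : #|[set:: map unbits L]| = size L.
Proof.
have sizeL := mask_partition_size L_partition.
rewrite cardsE (card_uniqP _) ?size_map // map_inj_in_uniq ?(mask_partition_uniq L_partition) //.
by move=> M N ML NL eqMN; rewrite -(bits_unbits (sizeL M ML)) eqMN bits_unbits ?sizeL.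
Qed.

End FromMasks.

Section Coalitions.
Variable P : {set {set T}}.
Hypothesis P_partition : partition P [set: T].
Local Notation LP := (map bits (enum P)).

Lemma coalition_okP A : A \in P ->
  reflect ((#|A| = 1 /\ fair_dominating e A) \/
           (~ fair_dominating e A /\ exists2 B, B \in P & B != A /\ fair_coalition e A B))
          (coalition_ok fdm LP (bits A)).
Proof.
move=> AP; have [_ trivP _] := and3P P_partition.
rewrite /coalition_ok count_bits.
apply: (iffP orP) => [[/andP [/eqP cardA /fair_dominatingP fdA] | /andP [nfdA]]|].
- by left.
- move=> /hasP [_ /mapP [B BP ->] /and3P [neqBA /fair_dominatingP nfdB]].
  rewrite bits_setU mem_enum in BP * => /fair_dominatingP fdAB; right.
  have neqAB : B != A by apply: contraNneq neqBA => ->.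
  split; first exact/fair_dominatingP.
  exists B => //; split=> //; split; last by split=> //; exact/fair_dominatingP.
  by apply: (trivIsetP trivP); rewrite // eq_sym.
case=> [[cardA /fair_dominatingP fdA] | [nfdA [B BP [neqBA [_ [_ [nfdB fdAB]]]]]]].
  by left; rewrite cardA eqxx.
right; apply/andP; split; first exact/fair_dominatingP.
apply/hasP; exists (bits B); first by rewrite map_f ?mem_enum.
rewrite bits_setU (inj_eq bits_inj) neqBA.
by apply/and3P; split=> //; apply/fair_dominatingP.
Qed.

Lemma fc_partition_masksP : reflect (fc_partition e P) (fc_masks fdm LP).
Proof.
apply: (iffP allP) => [ok_blocks | [_ fcP] _ /mapP [A AP ->]].
  by split=> // A AP; apply/coalition_okP => //; apply: ok_blocks; rewrite map_f ?mem_enum.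
by rewrite mem_enum in AP; apply/coalition_okP => //; exact: fcP.
Qed.

End Coalitions.

Lemma fc_partition_card_le m fuel :
  check_partitions (fc_bounded (lookup (tabulate fdm n)) m) fuel (nseq n false) [::] ->
  forall P, fc_partition e P -> #|P| <= m.
Proof.
move=> checked P fcP; have P_partition := fcP.1.
have LP_partition := mask_partition_bits P_partition.
have := check_partitions_all (@fc_bounded_perm _ m) LP_partition checked.
rewrite /fc_bounded size_map -cardE (fc_masks_eq_in (f2 := fdm) (n := n)) => [|M|M].
- by move/implyP; apply; apply/fc_partition_masksP.
- exact: lookup_tabulate.
- by case/mapP=> A _ ->; exact: size_bits.
Qed.

Lemma fc_partition_of_masks L : mask_partition n L -> fc_masks fdm L ->
  exists P, fc_partition e P /\ #|P| = size L.
Proof.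
move=> L_partition fcL; exists [set:: map unbits L]; split; last exact: card_unbits.
have sizeL := mask_partition_size L_partition.
have bits_enumE : map bits (enum [set:: map unbits L]) =i L.
  move=> M; apply/mapP/idP => [[A] | ML].
    by rewrite mem_enum inE => /mapP [N NL ->] ->; rewrite bits_unbits ?sizeL.
  by exists (unbits M); rewrite ?mem_enum ?inE ?map_f ?bits_unbits ?sizeL.
apply/(fc_partition_masksP (partition_unbits L_partition)).
by rewrite (fc_masks_eq_mem _ bits_enumE).
Qed.

End MaskEncoding.

(* [insub] on [petersen_vertex] is blocked by the opaque [idP] under
   [vm_compute], so all computations run on the pairs {a < b} themselves. *)
Definition petersen_pairs : seq (nat * nat) :=
  [seq (a, b) | a <- iota 0 5, b <- iota a.+1 (4 - a)].

Definition pairs_disjoint (p q : nat * nat) : bool :=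
  [&& p.1 != q.1, p.1 != q.2, p.2 != q.1 & p.2 != q.2].

Definition petersen_matrix : seq (seq bool) :=
  [seq [seq pairs_disjoint p q | q <- petersen_pairs] | p <- petersen_pairs].

Lemma card_set2 (i j : 'I_5) : i != j -> #|[set i; j]| == 2.
Proof. by rewrite cards2 => ->. Qed.

Definition pair_vertex (p : nat * nat) : petersen_vertex :=
  insubd (Sub [set ord0; ord_max] (card_set2 (isT : ord0 != ord_max :> 'I_5)))
         [set inord p.1; inord p.2].

Definition petersen_enum : seq petersen_vertex := map pair_vertex petersen_pairs.

Lemma petersen_pairs_lt p : p \in petersen_pairs -> [&& p.1 < 5, p.2 < 5 & p.1 != p.2].
Proof. by apply/allP: p; vm_compute. Qed.

Lemma val_pair_vertex p : p \in petersen_pairs ->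
  val (pair_vertex p) = [set inord p.1; inord p.2].
Proof.
case/petersen_pairs_lt/and3P => lt1 lt2 neq12; rewrite /pair_vertex insubdK //.
by apply: card_set2; rewrite -(inj_eq val_inj) /= !inordK.
Qed.

Lemma adj_pair_vertex p q : p \in petersen_pairs -> q \in petersen_pairs ->
  petersen_adj (pair_vertex p) (pair_vertex q) = pairs_disjoint p q.
Proof.
move=> pP qP; rewrite /petersen_adj !val_pair_vertex //.
move: pP qP => /petersen_pairs_lt /and3P [p1 p2 _] /petersen_pairs_lt /and3P [q1 q2 _].
rewrite disjoints_subset subUset !sub1set !inE -!val_eqE /= !inordK //.
by rewrite /pairs_disjoint !negb_or !andbA.
Qed.

Lemma petersen_adjacency : adjacency petersen_adj petersen_enum = petersen_matrix.
Proof.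
rewrite /adjacency /bits /petersen_enum -map_comp; apply/eq_in_map => p pP.
rewrite /comp -map_comp; apply/eq_in_map => q qP /=.
by rewrite inE adj_pair_vertex.
Qed.

Lemma petersen_enum_uniq : uniq petersen_enum.
Proof.
apply: (@map_uniq _ _ (fun v => bits petersen_enum (nbhd petersen_adj v))).
by change (uniq (adjacency petersen_adj petersen_enum)); rewrite petersen_adjacency; vm_compute.
Qed.

Lemma card_petersen_vertex : #|{: petersen_vertex}| = 10.
Proof. by rewrite card_sig -cardsE card_draws card_ord. Qed.

Lemma petersen_enum_full v : v \in petersen_enum.
Proof.
have sub_enum : {subset petersen_enum <= enum {: petersen_vertex}} by move=> u; rewrite mem_enum.
have le_size : size (enum {: petersen_vertex}) <= size petersen_enum.
  by rewrite -cardE card_petersen_vertex size_map.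
by have [_ ->] := uniq_min_size petersen_enum_uniq sub_enum le_size; rewrite mem_enum.
Qed.

Definition petersen_witness : seq (seq bool) :=
  let S := [:: (0, 1); (0, 3); (1, 2)] in
  [seq [seq p \in B | p <- petersen_pairs]
    | B <- [seq [:: p] | p <- S] ++ [:: [seq p <- petersen_pairs | p \notin S]]].

Lemma petersen_witness_fc :
  mask_partition 10 petersen_witness &&
  fc_masks (fair_dominating_mask petersen_matrix) petersen_witness.
Proof. by vm_compute. Qed.

Lemma petersen_partitions_fc_bounded :
  check_partitions (fc_bounded (lookup (tabulate (fair_dominating_mask petersen_matrix) 10)) 4)
    11 (nseq 10 false) [::].
Proof. by vm_compute. Qed.

Theorem theorem3p3 : is_fair_coalition_number petersen_adj 4.
Proof.
have size_enum : size petersen_enum = 10 by rewrite size_map.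
have [W_partition W_fc] := andP petersen_witness_fc.
split.
  have := fc_partition_of_masks petersen_enum_uniq petersen_enum_full (e := petersen_adj)
            (L := petersen_witness).
  by rewrite size_enum petersen_adjacency => /(_ W_partition W_fc).
apply: (fc_partition_card_le petersen_enum_uniq petersen_enum_full (fuel := 11)).
by rewrite size_enum petersen_adjacency; exact: petersen_partitions_fc_bounded.
Qed.
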